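(* In the setting of the context, the market $(S^0,S)$ admits strong $\rho$-arbitrage if and only if $\rho_1 < 0$, where $\rho_1 := \inf\{\rho(X_\pi) : \pi \in \mathbb{R}^d,\ \mathbb{E}[X_\pi] = 1\}$.
   Context: Let $(\Omega,\mathcal{F},\mathbb{P})$ be a probability space. The market consists of a riskless asset with $S^0_0 = 1$, $S^0_1 = 1+r$, $r > -1$, and $d$ risky assets $S^1,\dots,S^d$ with constants $S^i_0 > 0$ and real-valued $\mathcal{F}$-measurable $S^i_1$. Returns: $R^i := (S^i_1 - S^i_0)/S^i_0$, $R = (R^1,\dots,R^d)$. Standing assumptions: nonredundancy (if $\theta\in\mathbb{R}^{1+d}$ and $\sum_{i=0}^d \theta^i S^i_t = 0$ a.s. for $t\in\{0,1\}$ then $\theta=0$); $R^i \in L^1(\mathbb{P})$, $\mu^i := \mathbb{E}[R^i]$; $\mu^i \ne r$ for some $i$. Portfolio $\pi\in\mathbb{R}^d$ has excess return $X_\pi := \pi\cdot(R - r\mathbf{1})$. $L$ is a Riesz space with $L^\infty\subset L\subset L^1$ containing all $X_\pi$, and $\rho: L\to(-\infty,\infty]$ is monotone, cash-invariant ($\rho(X+c)=\rho(X)-c$) and positively homogeneous ($\rho(\lambda X)=\lambda\rho(X)$, $\lambda\ge0$). The market admits strong $\rho$-arbitrage if for every portfolio $\pi\in\mathbb{R}^d$ there exists $\pi'\in\mathbb{R}^d$ with $\mathbb{E}[X_{\pi'}] > \mathbb{E}[X_\pi]$ and $\rho(X_{\pi'}) < \rho(X_\pi)$. *)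

From HB Require Import structures.
From mathcomp Require Import all_boot all_order all_algebra.
From mathcomp Require Import all_classical all_reals all_analysis.
Set Implicit Arguments. Unset Strict Implicit. Unset Printing Implicit Defensive.
Import Order.TTheory GRing.Theory Num.Theory.
Local Open Scope classical_set_scope.
Local Open Scope ring_scope.

Section Market.
Context {R : realType} {dsp : measure_display} {T : measurableType dsp}.
Variable (P : probability T R).

Definition mkt_mean (X : T -> R) : \bar R := (\int[P]_x (X x)%:E)%E.

Definition asset_return (d : nat) (S0 : 'I_d -> R) (S1 : 'I_d -> T -> R) (i : 'I_d) : T -> R :=
  fun x => (S1 i x - S0 i) / S0 i.

Definition excess_return (d : nat) (S0 : 'I_d -> R) (S1 : 'I_d -> T -> R) (r : R)
  (pi : 'I_d -> R) : T -> R :=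
  fun x => \sum_(i < d) pi i * (asset_return S0 S1 i x - r).

Definition nonredundant (d : nat) (S0 : 'I_d -> R) (S1 : 'I_d -> T -> R) (r : R) :=
  forall (th0 : R) (th : 'I_d -> R),
    th0 * 1 + \sum_(i < d) th i * S0 i = 0 ->
    {ae P, forall x, th0 * (1 + r) + \sum_(i < d) th i * S1 i x = 0} ->
    th0 = 0 /\ (forall i, th i = 0).

(* L : a Riesz space of (representatives of) random variables with
   L^oo ⊆ L ⊆ L^1; membership depends only on the a.s. class. *)
Definition riesz_between (L : set (T -> R)) :=
  (forall X Y, L X -> L Y -> L (X \+ Y)) /\
  (forall (a : R) X, L X -> L (fun x => a * X x)) /\
  (forall X, L X -> L (fun x => Num.max (X x) 0)) /\
  (forall X : T -> R, measurable_fun setT X ->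
       (exists M : R, {ae P, forall x, `|X x| <= M}) -> L X) /\
  (forall X, L X -> P.-integrable setT (EFin \o X)) /\
  (forall X Y : T -> R, L X -> measurable_fun setT Y ->
       {ae P, forall x, X x = Y x} -> L Y).

Definition risk_measure (L : set (T -> R)) (rho : (T -> R) -> \bar R) :=
  [/\ (forall X, L X -> rho X != -oo%E),
      (forall X Y, L X -> L Y -> {ae P, forall x, X x <= Y x} ->
           (rho Y <= rho X)%E),
      (forall X (c : R), L X -> rho (fun x => X x + c) = (rho X - c%:E)%E) &
      (forall X (l : R), L X -> 0 <= l ->
           rho (fun x => l * X x) = (l%:E * rho X)%E)].

Definition strong_arbitrage (d : nat) (S0 : 'I_d -> R) (S1 : 'I_d -> T -> R)
  (r : R) (rho : (T -> R) -> \bar R) :=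
  forall pi : 'I_d -> R, exists pi' : 'I_d -> R,
    (mkt_mean (excess_return S0 S1 r pi') > mkt_mean (excess_return S0 S1 r pi))%E /\
    (rho (excess_return S0 S1 r pi') < rho (excess_return S0 S1 r pi))%E.

Definition rho_one (d : nat) (S0 : 'I_d -> R) (S1 : 'I_d -> T -> R)
  (r : R) (rho : (T -> R) -> \bar R) : \bar R :=
  ereal_inf [set rho (excess_return S0 S1 r pi) | pi in
               [set pi : 'I_d -> R | mkt_mean (excess_return S0 S1 r pi) = 1%E]].

End Market.

From HB Require Import structures.
From mathcomp Require Import all_boot all_order all_algebra.
From mathcomp Require Import all_classical all_reals all_analysis.
Import Order.TTheory GRing.Theory Num.Theory.
Local Open Scope classical_set_scope.
Local Open Scope ring_scope.

(* Proof: portfolios form a vector space, [pi |-> X_pi] is linear and rho is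
   positively homogeneous, so mean and risk scale together. A portfolio that
   strongly dominates [pi = 0] has positive mean and negative risk; normalising
   its mean to 1 gives [rho_1 < 0]. Conversely, a mean-one portfolio of
   negative risk, scaled by a large enough [lam], beats any given portfolio
   both in mean (which grows like [lam]) and in risk (which tends to -oo). *)

Section ExcessReturn.
Context {R : realType} {dsp : measure_display} {T : measurableType dsp}.
Variables (d : nat) (S0 : 'I_d -> R) (S1 : 'I_d -> T -> R) (r : R).

Lemma excess_returnZ (l : R) (pi : 'I_d -> R) :
  excess_return S0 S1 r (fun i => l * pi i) =
  (fun x => l * excess_return S0 S1 r pi x).
Proof.
apply: funext => x; rewrite /excess_return mulr_sumr.
by apply: eq_bigr => i _; rewrite mulrA.
Qed.

Lemma excess_return0 : excess_return S0 S1 r (fun=> 0) = (fun=> 0).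
Proof.
by apply: funext => x; rewrite /excess_return big1 // => i _; rewrite mul0r.
Qed.

End ExcessReturn.

Lemma mkt_meanZ (R : realType) (dsp : measure_display) (T : measurableType dsp)
  (P : probability T R) (X : T -> R) (l : R) :
  P.-integrable setT (EFin \o X) ->
  mkt_mean P (fun x => l * X x) = (l%:E * mkt_mean P X)%E.
Proof.
move=> intX; rewrite /mkt_mean.
under eq_integral do rewrite EFinM.
exact: integralZl.
Qed.

Lemma exists_scale_dominating (R : realType) (m v : R) (y : \bar R) :
  v < 0 -> y != -oo%E ->
  exists2 lam, 0 <= lam & m < lam /\ ((lam * v)%:E < y)%E.
Proof.
move=> v_lt0 y_neqNy.
set lam := Num.max 0 (Num.max m (fine y / v)) + 1.
have lam_gt (z : R) : z <= Num.max 0 (Num.max m (fine y / v)) -> z < lam.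
  by move=> z_le; apply: le_lt_trans z_le _; rewrite ltrDl.
have lam_gt0 : 0 < lam by apply: lam_gt; rewrite le_max lexx.
have m_lt_lam : m < lam by apply: lam_gt; rewrite !le_max lexx orbT.
have y_lt_lam : fine y / v < lam by apply: lam_gt; rewrite !le_max lexx !orbT.
exists lam; first exact: ltW.
split=> //; clear lam_gt; clearbody lam.
case: y y_neqNy y_lt_lam => [w _ | _ _ | //] /=; last exact: ltry.
by rewrite lte_fin -(ltr_ndivrMr _ _ v_lt0).
Qed.

Section StrongArbitrage.
Context {R : realType} {dsp : measure_display} {T : measurableType dsp}.
Context {P : probability T R} {d : nat} {S0 : 'I_d -> R}
  {S1 : 'I_d -> T -> R} {r : R} {L : set (T -> R)} {rho : (T -> R) -> \bar R}.

Local Notation X := (excess_return S0 S1 r).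

Hypothesis L_excess_return : forall pi, L (X pi).
Hypothesis integrable_excess_return :
  forall pi, P.-integrable setT (EFin \o X pi).
Hypothesis rho_neqNy : forall Y, L Y -> rho Y != -oo%E.
Hypothesis rhoZ : forall Y (l : R), L Y -> 0 <= l ->
  rho (fun x => l * Y x) = (l%:E * rho Y)%E.

Lemma mean_excess_returnZ (l : R) pi :
  mkt_mean P (X (fun i => l * pi i)) = (l%:E * mkt_mean P (X pi))%E.
Proof. by rewrite excess_returnZ mkt_meanZ. Qed.

Lemma rho_excess_returnZ (l : R) pi : 0 <= l ->
  rho (X (fun i => l * pi i)) = (l%:E * rho (X pi))%E.
Proof. by move=> l_ge0; rewrite excess_returnZ rhoZ. Qed.

Lemma mean_excess_return_real pi : exists m : R, mkt_mean P (X pi) = m%:E.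
Proof.
exists (fine (mkt_mean P (X pi))); rewrite fineK //.
exact: integrable_fin_num (integrable_excess_return pi).
Qed.

Lemma rho_real_of_lt0 pi :
  (rho (X pi) < 0)%E -> exists2 v : R, rho (X pi) = v%:E & v < 0.
Proof.
have := rho_neqNy _ (L_excess_return pi).
by case: (rho (X pi)) => [v _ | // | //]; rewrite lte_fin; exists v.
Qed.

Lemma mean0_excess_return0 : mkt_mean P (X (fun=> 0)) = 0%E.
Proof. by rewrite excess_return0 /mkt_mean integral0. Qed.

Lemma rho0_excess_return0 : rho (X (fun=> 0)) = 0%E.
Proof.
have -> : (fun=> 0) = (fun i : 'I_d => 0 * (0 : R)) by rewrite mul0r.
by rewrite rho_excess_returnZ // mul0e.
Qed.

Lemma strong_arbitrage_rho_one_lt0 :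
  strong_arbitrage P S0 S1 r rho -> (rho_one P S0 S1 r rho < 0)%E.
Proof.
move/(_ (fun=> 0)); rewrite mean0_excess_return0 rho0_excess_return0.
move=> [p [mean_gt0 /rho_real_of_lt0 [v rhoE v_lt0]]].
have [m meanE] := mean_excess_return_real p.
rewrite meanE lte_fin in mean_gt0.
apply: (@le_lt_trans _ _ ((m^-1 * v)%:E)); last first.
  by rewrite lte_fin pmulr_rlt0 // invr_gt0.
apply: ereal_inf_lbound; exists (fun i => m^-1 * p i).
  by rewrite /= mean_excess_returnZ meanE -EFinM mulVf // gt_eqF.
by rewrite rho_excess_returnZ ?invr_ge0 ?ltW // rhoE.
Qed.

Lemma rho_one_lt0_strong_arbitrage :
  (rho_one P S0 S1 r rho < 0)%E -> strong_arbitrage P S0 S1 r rho.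
Proof.
move=> /ereal_inf_lt [_ [p1 /= mean1 <-] /rho_real_of_lt0 [v rhoE v_lt0]] pi.
have [m meanE] := mean_excess_return_real pi.
have [lam lam_ge0 [m_lt_lam lam_v_lt]] :=
  exists_scale_dominating _ m v _ v_lt0 (rho_neqNy _ (L_excess_return pi)).
exists (fun i => lam * p1 i); split.
  by rewrite mean_excess_returnZ mean1 mule1 meanE lte_fin.
by rewrite rho_excess_returnZ // rhoE -EFinM.
Qed.

End StrongArbitrage.

Theorem theorem3p18 (R : realType) (dsp : measure_display)
  (T : measurableType dsp) (P : probability T R) (d : nat)
  (r : R) (S0 : 'I_d -> R) (S1 : 'I_d -> T -> R)
  (L : set (T -> R)) (rho : (T -> R) -> \bar R) :
  -1 < r ->
  (forall i, 0 < S0 i) ->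
  (forall i, measurable_fun setT (S1 i)) ->
  nonredundant P S0 S1 r ->
  (forall i, P.-integrable setT (EFin \o asset_return S0 S1 i)) ->
  (exists i, mkt_mean P (asset_return S0 S1 i) != r%:E) ->
  riesz_between P L ->
  (forall pi : 'I_d -> R, L (excess_return S0 S1 r pi)) ->
  risk_measure P L rho ->
  (strong_arbitrage P S0 S1 r rho <-> (rho_one P S0 S1 r rho < (0:R)%:E)%E).
Proof.
move=> _ _ _ _ _ _ [_ [_ [_ [_ [L_integrable _]]]]] L_X [rho_neqNy _ _ rhoZ].
have integrable_X pi := L_integrable _ (L_X pi).
split=> [arbitrage | rho_one_lt0].
- exact: (strong_arbitrage_rho_one_lt0 L_X integrable_X rho_neqNy rhoZ arbitrage).
- exact: (rho_one_lt0_strong_arbitrage L_X integrable_X rho_neqNy rhoZ rho_one_lt0).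
Qed.
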